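(* Let $\langle T,\le\rangle$ be a temporal flow and let $v$ be a temporal assignment over variables on $T$, extended to all formulas as described in the context. Then for every formula $\varphi$, the function $v(\varphi,\cdot):T\to\{0,\tfrac12,1\}$ is admissible.
   Context: A temporal flow is a totally ordered infinite set $\langle T,\le\rangle$. On $\{0,\frac12,1\}$ (with $0<\frac12<1$) put $\neg_3x=1-x$ and $x\to_3y=\min(1,1-x+y)$. A function $f:T\to\{0,\frac12,1\}$ is admissible if either (i) $f$ is constant (with value $0$, $\frac12$ or $1$), or (ii) there exist $i\in\{0,1\}$ and $t\in T$, with $t$ not the minimum of $T$ (if $T$ has a minimum), such that $f(t')=i$ for all $t'\ge t$ and $f(t'')=\frac12$ for all $t''<t$. Formulas are built from propositional variables and $\bot$ using the connectives $\neg$ and $\to$. A temporal assignment over variables is a map $v:VAR\times T\to\{0,\frac12,1\}$ such that $v(x,\cdot)$ is admissible for every variable $x$. It is extended to formulas inductively: $v(\bot,t)=0$; $v(\neg\psi,t)=\neg_3v(\psi,t)$; and $v(\psi\to\chi,t)=v(\psi,t)\to_3v(\chi,t)$ if $v(\psi,t)\to_3v(\chi,t)=v(\psi,t')\to_3v(\chi,t')$ for every $t'\ge t$, and $v(\psi\to\chi,t)=\frac12$ otherwise. *)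

From Stdlib Require Import List.

(* Truth values {0, 1/2, 1} with 0 < 1/2 < 1. *)
Inductive V3 : Type := V0 | Vh | V1.

(* neg_3 x = 1 - x *)
Definition neg3 (x : V3) : V3 :=
  match x with V0 => V1 | Vh => Vh | V1 => V0 end.

(* x ->_3 y = min(1, 1 - x + y) *)
Definition imp3 (x y : V3) : V3 :=
  match x, y with
  | V0, _ => V1
  | Vh, V0 => Vh
  | Vh, _ => V1
  | V1, y => y
  end.

(* Temporal flow: a totally ordered infinite set <T, le>. *)
Definition temporal_flow (T : Type) (le : T -> T -> Prop) : Prop :=
  (forall x, le x x) /\
  (forall x y z, le x y -> le y z -> le x z) /\
  (forall x y, le x y -> le y x -> x = y) /\
  (forall x y, le x y \/ le y x) /\
  (forall l : list T, exists x, ~ In x l).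

Definition is_minimum (T : Type) (le : T -> T -> Prop) (t : T) : Prop :=
  forall t', le t t'.

Definition admissible (T : Type) (le : T -> T -> Prop) (f : T -> V3) : Prop :=
  (exists c : V3, forall t, f t = c) \/
  (exists (i : V3) (t : T),
      (i = V0 \/ i = V1) /\ ~ is_minimum T le t /\
      (forall t', le t t' -> f t' = i) /\
      (forall t'', le t'' t -> t'' <> t -> f t'' = Vh)).

Inductive formula : Type :=
  | Var : nat -> formula
  | Bot : formula
  | Neg : formula -> formula
  | Imp : formula -> formula -> formula.

Definition temporal_assignment (T : Type) (le : T -> T -> Prop)
    (v : nat -> T -> V3) : Prop :=
  forall x, admissible T le (v x).

From Stdlib Require Import Classical ClassicalEpsilon.

Definition pdec (P : Prop) : {P} + {~ P} :=
  excluded_middle_informative P.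

Fixpoint eval (T : Type) (le : T -> T -> Prop) (v : nat -> T -> V3)
    (phi : formula) (t : T) : V3 :=
  match phi with
  | Var x => v x t
  | Bot => V0
  | Neg psi => neg3 (eval T le v psi t)
  | Imp psi chi =>
      if pdec (forall t', le t t' ->
                 imp3 (eval T le v psi t) (eval T le v chi t)
                 = imp3 (eval T le v psi t') (eval T le v chi t'))
      then imp3 (eval T le v psi t) (eval T le v chi t)
      else Vh
  end.

(* A function with finitely many breakpoints (where its value may change) is
   closed under pointwise operations, and every admissible function has at
   most one breakpoint.  The value of an implication at t is its pointwise
   value if that value stays constant on [t, oo), and 1/2 otherwise; for a
   function with finitely many breakpoints the set of such t is an up-set
   which is either empty, everything, or has a least element (the least
   breakpoint in it), so the result is again admissible.  Negation preserves
   admissibility, and induction on formulas concludes. *)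
From Stdlib Require Import List Classical.

Section ListMax.

Variables (A : Type) (R : A -> A -> Prop).
Hypothesis R_trans : forall x y z, R x y -> R y z -> R x z.
Hypothesis R_total : forall x y, R x y \/ R y x.

Lemma exists_max_in_list (l : list A) (P : A -> Prop) :
  (exists k, In k l /\ P k) ->
  exists m, In m l /\ P m /\ forall k, In k l -> P k -> R k m.
Proof.
  assert (R_refl : forall x, R x x) by (intro x; destruct (R_total x x); assumption).
  induction l as [|a l IH]; intros [k [Hk Pk]]; [destruct Hk|].
  destruct (classic (exists k, In k l /\ P k)) as [Hex|Hno].
  - destruct (IH Hex) as [m [Hm [Pm Hmax]]].
    destruct (classic (P a /\ R m a)) as [[Pa Hma]|Hna].
    + exists a; split; [left; reflexivity|split; [assumption|]].
      intros k' [<-|Hk'] Pk'; eauto.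
    + exists m; split; [right; assumption|split; [assumption|]].
      intros k' [<-|Hk'] Pk'; [|auto].
      destruct (R_total a m); [assumption|tauto].
  - destruct Hk as [<-|Hk]; [|exfalso; eauto].
    exists a; split; [left; reflexivity|split; [assumption|]].
    intros k' [<-|Hk'] Pk'; [apply R_refl|exfalso; eauto].
Qed.

End ListMax.

Section TemporalFlow.

Variables (T : Type) (le : T -> T -> Prop).
Hypothesis le_refl : forall x, le x x.
Hypothesis le_trans : forall x y z, le x y -> le y z -> le x z.
Hypothesis le_anti : forall x y, le x y -> le y x -> x = y.
Hypothesis le_total : forall x y, le x y \/ le y x.

(* [f] can only change value across a point of [l]: [f t = f t'] whenever no
   element of [l] lies in the half-open interval (t, t']. *)
Definition breakpoints (l : list T) (f : T -> V3) : Prop :=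
  forall t t', le t t' -> (forall k, In k l -> le k t' -> le k t) -> f t = f t'.

Definition piecewise_constant (f : T -> V3) : Prop :=
  exists l, breakpoints l f.

Lemma admissible_piecewise_constant f :
  admissible T le f -> piecewise_constant f.
Proof.
  intros [[c Hc]|[i [t0 [_ [_ [Hge Hlt]]]]]].
  - exists nil; intros t t' _ _; rewrite !Hc; reflexivity.
  - exists (t0 :: nil); intros t t' Htt' Hbr.
    destruct (classic (le t0 t)) as [H0t|H0t].
    + rewrite (Hge t H0t), (Hge t'); eauto.
    + assert (H0t' : ~ le t0 t') by (intro H; apply H0t, Hbr; simpl; auto).
      assert (Hbelow : forall s, ~ le t0 s -> le s t0 /\ s <> t0).
      { intros s Hs; split; [destruct (le_total s t0); tauto|].
        intros ->; auto. }
      destruct (Hbelow t H0t), (Hbelow t' H0t').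
      rewrite (Hlt t), (Hlt t'); auto.
Qed.

Lemma piecewise_constant_map2 (op : V3 -> V3 -> V3) f g :
  piecewise_constant f -> piecewise_constant g ->
  piecewise_constant (fun t => op (f t) (g t)).
Proof.
  intros [lf Hf] [lg Hg]; exists (lf ++ lg); intros t t' Htt' Hbr.
  rewrite (Hf t t'), (Hg t t'); auto;
    intros k Hk; apply Hbr, in_or_app; auto.
Qed.

Lemma admissible_neg3 f :
  admissible T le f -> admissible T le (fun t => neg3 (f t)).
Proof.
  intros [[c Hc]|[i [t0 [Hi [Hnm [Hge Hlt]]]]]].
  - left; exists (neg3 c); intro t; rewrite Hc; reflexivity.
  - right; exists (neg3 i), t0; repeat split; [|assumption| |].
    + destruct Hi as [->| ->]; auto.
    + intros t' H; rewrite Hge; auto.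
    + intros t'' H1 H2; rewrite Hlt; auto.
Qed.

Definition stable_at (g : T -> V3) (t : T) : Prop :=
  forall t', le t t' -> g t = g t'.

Lemma stable_at_up g t t' : stable_at g t -> le t t' -> stable_at g t'.
Proof.
  intros Ht Htt' s Hs; rewrite <- (Ht t' Htt'), (Ht s); eauto.
Qed.

Lemma stable_at_eq g t t' : stable_at g t -> stable_at g t' -> g t = g t'.
Proof.
  intros Ht Ht'; destruct (le_total t t'); [auto|symmetry; auto].
Qed.

(* The largest breakpoint below a stable point is already stable. *)
Lemma stable_at_breakpoint l g s :
  breakpoints l g -> stable_at g s ->
  (exists k, In k l /\ stable_at g k /\ le k s) \/ (forall t, stable_at g t).
Proof.
  intros Hg Hs.
  destruct (classic (exists k, In k l /\ le k s)) as [Hex|Hno].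
  - destruct (exists_max_in_list T le le_trans le_total l (fun k => le k s) Hex)
      as [m [Hm [Hms Hmax]]].
    assert (Hval : forall t, le m t -> g t = g s).
    { intros t Hmt; destruct (le_total s t) as [Hst|Hts].
      - symmetry; auto.
      - apply Hg; eauto. }
    left; exists m; repeat split; [assumption| |assumption].
    intros t Hmt; rewrite (Hval m (le_refl m)), (Hval t Hmt); reflexivity.
  - assert (Hval : forall t, g t = g s).
    { intro t; destruct (le_total s t) as [Hst|Hts].
      - symmetry; auto.
      - apply Hg; [assumption|]; intros k Hk Hks; exfalso; eauto. }
    right; intros t t' _; rewrite (Hval t), (Hval t'); reflexivity.
Qed.

Lemma stable_at_least g s :
  piecewise_constant g -> stable_at g s ->
  (forall t, stable_at g t) \/
  (exists m, ~ is_minimum T le m /\ stable_at g m /\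
             forall s', stable_at g s' -> le m s').
Proof.
  intros [l Hg] Hs.
  destruct (classic (forall t, stable_at g t)) as [Hall|Hnall]; [left; exact Hall|].
  right.
  destruct (classic (exists k, In k l /\ stable_at g k)) as [Hex|Hno].
  2:{ destruct (stable_at_breakpoint l g s Hg Hs) as [[k [Hk [Hsk _]]]|Hall];
        exfalso; eauto. }
  destruct (exists_max_in_list T (fun x y => le y x)
              (fun x y z Hxy Hyz => le_trans z y x Hyz Hxy)
              (fun x y => le_total y x) l (stable_at g) Hex) as [m [_ [Hm Hmin]]].
  exists m; repeat split; [|assumption|].
  - intro Hmin_m; apply Hnall; intro t; exact (stable_at_up g m t Hm (Hmin_m t)).
  - intros s' Hs'.
    destruct (stable_at_breakpoint l g s' Hg Hs') as [[k [Hk [Hsk Hks']]]|Hall];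
      [eauto|contradiction].
Qed.

Definition stabilize (g : T -> V3) (t : T) : V3 :=
  if pdec (stable_at g t) then g t else Vh.

Lemma admissible_stabilize g :
  piecewise_constant g -> admissible T le (stabilize g).
Proof.
  intros Hg; unfold stabilize.
  destruct (classic (exists s, stable_at g s)) as [[s Hs]|Hnone].
  2:{ left; exists Vh; intro t; destruct pdec; [exfalso; eauto|reflexivity]. }
  destruct (stable_at_least g s Hg Hs) as [Hall|[m [Hnmin [Hm Hleast]]]].
  { left; exists (g s); intro t; destruct pdec as [Ht|Ht].
    - apply stable_at_eq; auto.
    - contradiction (Ht (Hall t)). }
  destruct (classic (g m = Vh)) as [Hmh|Hmh].
  { left; exists Vh; intro t; destruct pdec as [Ht|]; [|reflexivity].
    rewrite (stable_at_eq g t m Ht Hm); assumption. }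
  right; exists (g m), m; repeat split; [|assumption| |].
  - destruct (g m); auto; contradiction.
  - intros t' Hmt'; destruct pdec as [Ht'|Ht'].
    + apply stable_at_eq; [|assumption]; eapply stable_at_up; eauto.
    + contradiction (Ht' (stable_at_up g m t' Hm Hmt')).
  - intros t'' Ht''m Hne; destruct pdec as [Ht''|]; [|reflexivity].
    contradiction (Hne (le_anti t'' m Ht''m (Hleast t'' Ht''))).
Qed.

Lemma admissible_eval v :
  temporal_assignment T le v -> forall phi, admissible T le (eval T le v phi).
Proof.
  intros Hv phi; induction phi as [x| |p IH|p IHp q IHq].
  - apply Hv.
  - left; exists V0; reflexivity.
  - exact (admissible_neg3 _ IH).
  - apply (admissible_stabilize (fun t => imp3 (eval T le v p t) (eval T le v q t))).
    apply piecewise_constant_map2; apply admissible_piecewise_constant; assumption.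
Qed.

End TemporalFlow.

Theorem mainTheorem2 (T : Type) (le : T -> T -> Prop)
    (Hflow : temporal_flow T le)
    (v : nat -> T -> V3) (Hv : temporal_assignment T le v) :
  forall phi : formula, admissible T le (eval T le v phi).
Proof.
  destruct Hflow as [Hrefl [Htrans [Hanti [Htot _]]]].
  eapply admissible_eval; eauto.
Qed.
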